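(* Let $d\ge2$ and let $\rho$ be a finite-dimensional representation of the Jacobi algebra $\mathbb C\langle a,b,c\rangle/([b,c],\,[c,a],\,[a,b]+d\,c^{d-1})$. Then each of the operators $\rho(a),\rho(b),\rho(c)$ preserves the generalized eigenspaces of each of the others, and $\rho(c)$ is nilpotent (its only generalized eigenvalue is $0$). Consequently $\rho$ decomposes canonically as $\rho\cong\bigoplus_{s\in\Sigma}\rho_s$ into nonzero submodules, with $\Sigma\subset\mathbb C^2$ finite, where for $s=(s_1,s_2)$ the generalized eigenvalues of $\rho(a),\rho(b),\rho(c)$ on $\rho_s$ are $s_1,s_2,0$ respectively.
   Context: This algebra is the Jacobi algebra of the three-loop quiver with potential $W_d=[a,b]c+c^d$, i.e. the quotient of the free algebra by the cyclic derivatives of $W_d$ with respect to $a,b,c$. *)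

(* the field C is modelled by algC (algebraic complex numbers,
   an algebraically closed field of characteristic 0). *)
From HB Require Import structures.
From mathcomp Require Import all_boot all_order all_algebra all_field.
Set Implicit Arguments. Unset Strict Implicit. Unset Printing Implicit Defensive.
Import Order.TTheory GRing.Theory Num.Theory.
Local Open Scope ring_scope.

(* A finite-dimensional representation of
     C<a,b,c> / ([b,c], [c,a], [a,b] + d c^(d-1))
   on C^n is a triple of n x n matrices A = rho(a), B = rho(b), C = rho(c),
   acting on COLUMN vectors, satisfying the defining relations. *)
Definition jacobi_rep (d n : nat) (A B C : 'M[algC]_n) : Prop :=
  [/\ B *m C - C *m B = 0,
      C *m A - A *m C = 0 &
      (A *m B - B *m A) + (C ^+ d.-1) *+ d = 0].

(* Generalized eigenspace of M (acting on column vectors) for eigenvalue l: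
   { v | (M - l)^n v = 0 }.  Since mxalgebra works with row spaces, we
   represent it as the row space of transposes of such column vectors,
   i.e. the row kernel of ((M - l)^n)^T. *)
Definition geneig (n : nat) (M : 'M[algC]_n) (l : algC) : 'M[algC]_n :=
  kermx (((M - l%:M) ^+ n)^T).

(* The subspace V (in the transposed convention above) is invariant under the
   operator X acting on column vectors:  v in V -> X v in V. *)
Definition op_stable (n : nat) (V X : 'M[algC]_n) : bool :=
  stablemx V X^T.

Definition preserves_geneigs (n : nat) (X Y : 'M[algC]_n) : Prop :=
  forall l : algC, op_stable (geneig Y l) X.

Definition joint_geneig (n : nat) (A B : 'M[algC]_n) (s : algC * algC)
  : 'M[algC]_n := (geneig A s.1 :&: geneig B s.2)%MS.

From HB Require Import structures.
From mathcomp Require Import all_boot all_order all_algebra all_field.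
Import Order.TTheory GRing.Theory Num.Theory.
Local Open Scope ring_scope.

(* Transposing turns the statement about column vectors into one about row
   spaces, with a = A^T, b = B^T, c = C^T and [a, b] = d c^(d-1).  This
   commutator commutes with a and b, and that already forces a and b to
   preserve each other's generalized eigenspaces; c commutes with both.  On an
   eigenspace of c, which a and b preserve, [a, b] acts as the scalar
   d x^(d-1) but has trace zero, so 0 is the only eigenvalue of c and c is
   nilpotent.  Finally the generalized eigenspaces of a split the space, and
   as b preserves each of them they split further along those of b. *)

Set Implicit Arguments. Unset Strict Implicit. Unset Printing Implicit Defensive.

Section KernelPowers.
Variables (F : fieldType) (n : nat).
Implicit Type h : 'M[F]_n.

Lemma kermx_exprS h i j : (kermx (h ^+ j) <= kermx (h ^+ (i + j)))%MS.
Proof. by apply/sub_kermxP; rewrite addnC exprD -mulmxE mulmxA mulmx_ker mul0mx. Qed.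

Lemma kermx_expr_stable h j : (kermx (h ^+ j.+1) <= kermx (h ^+ j))%MS ->
  forall i, (kermx (h ^+ (i + j)) <= kermx (h ^+ j))%MS.
Proof.
move=> stab_j; elim=> // i IHi; apply: submx_trans IHi; apply/sub_kermxP.
have: (kermx (h ^+ (i.+1 + j)) *m h ^+ i <= kermx (h ^+ j.+1))%MS.
  by apply/sub_kermxP; rewrite -mulmxA mulmxE -exprD addnS -addSn -mulmxE mulmx_ker.
by move/submx_trans/(_ stab_j)/sub_kermxP; rewrite -mulmxA mulmxE -exprD.
Qed.

(* The ranks of the kernels increase strictly until the chain stabilizes,
   so it has stabilized by the exponent n. *)
Lemma kermx_exprn h k : (kermx (h ^+ k) <= kermx (h ^+ n))%MS.
Proof.
have [/existsP[[j /= lt_jn] stab_j]|] :=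
  boolP [exists j : 'I_n.+1, kermx (h ^+ j.+1) <= kermx (h ^+ j)]%MS.
  apply: submx_trans (kermx_exprS h j k) _; rewrite addnC.
  apply: submx_trans (kermx_expr_stable stab_j k) _.
  by have := kermx_exprS h (n - j) j; rewrite subnK // -ltnS.
rewrite negb_exists => /forallP unstable.
suff: forall j, (j <= n.+1)%N -> (j <= \rank (kermx (h ^+ j)))%N.
  by move/(_ n.+1 (leqnn _)); rewrite leqNgt ltnS rank_leq_col.
elim=> // j IHj lt_jn; apply: leq_ltn_trans (IHj (ltnW lt_jn)) _.
have: (kermx (h ^+ j) < kermx (h ^+ j.+1))%MS.
  by rewrite ltmxE (kermx_exprS h 1 j) (unstable (Ordinal lt_jn)).
by rewrite ltmxErank => /andP[].
Qed.

End KernelPowers.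

Section SeqSums.
Variables (F : fieldType) (T : eqType) (n : nat).
Implicit Types (r : seq T) (A B : T -> 'M[F]_n).

Lemma sumsmx_seq_sup r A x : x \in r -> (A x <= \sum_(y <- r) A y)%MS.
Proof.
elim: r => // y r IHr; rewrite inE big_cons => /predU1P[->|/IHr].
  exact: addsmxSl.
by move/submx_trans; apply; apply: addsmxSr.
Qed.

Lemma sumsmx_seq_sub m r A (B : 'M[F]_(m, n)) :
  (forall x, x \in r -> (A x <= B)%MS) -> (\sum_(y <- r) A y <= B)%MS.
Proof.
elim: r => [|y r IHr] sAB; first by rewrite big_nil sub0mx.
rewrite big_cons addsmx_sub sAB ?mem_head // IHr // => x xr.
by rewrite sAB // inE xr orbT.
Qed.

Lemma sumsmx_seqS r A B : (forall x, x \in r -> (A x <= B x)%MS) ->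
  (\sum_(y <- r) A y <= \sum_(y <- r) B y)%MS.
Proof.
move=> sAB; apply: sumsmx_seq_sub => x xr.
exact: submx_trans (sAB x xr) (sumsmx_seq_sup _ xr).
Qed.

Lemma sumsmx_seqMr m r A (W : 'M[F]_(n, m)) :
  ((\sum_(y <- r) A y)%MS *m W <= \sum_(y <- r) <<A y *m W>>)%MS.
Proof.
elim: r => [|y r IHr]; first by rewrite !big_nil mul0mx sub0mx.
by rewrite !big_cons addsmxMr addsmxS // genmxE.
Qed.

End SeqSums.

Section GeneralizedEigenspaces.
Variables (F : fieldType) (n : nat).
Implicit Types (g : 'M[F]_n) (x y : F) (r : seq F).

Lemma geigenspace0_full_nilpotent g : (1%:M <= geigenspace g 0)%MS -> g ^+ n = 0.
Proof.
case: n g => [|n'] g; first by move=> _; apply: thinmx0.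
by rewrite geigenspaceE raddf0 subr0 => /sub_kermxP; rewrite mul1mx.
Qed.

Lemma coprimep_XsubC_expr_prod x k r : x \notin r ->
  coprimep (('X - x%:P) ^+ k) (\prod_(y <- r) ('X - y%:P) ^+ k).
Proof.
move=> xNr; rewrite coprimep_expl // coprimep_sym coprimep_XsubC rootE.
rewrite horner_prod prodf_seq_neq0; apply/allP => y yr.
by rewrite horner_exp hornerXsubC expf_neq0 // subr_eq0; apply: contraNneq xNr => ->.
Qed.

Lemma kermxpoly_prod_XsubC_expr g k r : uniq r ->
  (kermxpoly g (\prod_(x <- r) ('X - x%:P) ^+ k)
     :=: \sum_(x <- r) kermxpoly g (('X - x%:P) ^+ k))%MS.
Proof.
elim: r => [|x r IHr] /=; first by rewrite !big_nil kermxpoly1.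
case/andP=> xNr /IHr eq_r; rewrite !big_cons.
apply: eqmx_trans (kermxpolyM _ (coprimep_XsubC_expr_prod k xNr)) _.
exact: adds_eqmx.
Qed.

Lemma capmx_geigenspace g x y : x != y ->
  (geigenspace g x :&: geigenspace g y = 0)%MS.
Proof.
move=> neq_xy; apply: mxdirect_kermxpoly.
by rewrite coprimep_expr // coprimep_expl // coprimep_XsubC root_XsubC eq_sym.
Qed.

Lemma geigenspace_cap_neq0 m g x y (V : 'M[F]_(m, n)) :
  (V <= geigenspace g x)%MS -> (V :&: geigenspace g y != 0)%MS -> y = x.
Proof.
move=> sVx; apply: contraTeq => neq_yx; rewrite negbK -submx0.
by rewrite eq_sym in neq_yx; rewrite -(capmx_geigenspace g neq_yx) capmxS.
Qed.

Lemma mxdirect_sum_sub_geigenspace g r (V_ : F -> 'M[F]_n) : uniq r ->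
  (forall x, x \in r -> (V_ x <= geigenspace g x)%MS) ->
  mxdirect (\sum_(x <- r) V_ x).
Proof.
elim: r => [|x r IHr] /=; first by rewrite mxdirectE /= !big_nil mxrank0.
case/andP=> xNr uniq_r sVg.
have sVg_r y : y \in r -> (V_ y <= geigenspace g y)%MS.
  by move=> yr; rewrite sVg // inE yr orbT.
rewrite mxdirectE /= !big_cons mxrank_disjoint_sum.
  by rewrite (mxdirectP (IHr uniq_r sVg_r)).
apply/eqP; rewrite -submx0.
rewrite -[X in (_ <= X)%MS](mxdirect_kermxpoly g (coprimep_XsubC_expr_prod n xNr)).
rewrite capmxS ?sVg ?mem_head // (kermxpoly_prod_XsubC_expr g n uniq_r).
exact: sumsmx_seqS.
Qed.

End GeneralizedEigenspaces.

Lemma commutator_exprS (R : pzRingType) (g h N : R) :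
  g * h = h * g - N -> GRing.comm N h ->
  forall k, g * h ^+ k.+1 = h ^+ k.+1 * g - N * h ^+ k *+ k.+1.
Proof.
move=> gh Nh; elim=> [|k IHk]; first by rewrite expr1 expr0 mulr1 mulr1n.
rewrite exprSr mulrA IHk mulrBl -mulrA gh mulrBr mulrA -exprSr.
rewrite mulrnAl -[_ * h ^+ k * h]mulrA -exprSr -(commrX k.+1 Nh).
by rewrite [in RHS]mulrS opprD addrA.
Qed.

(* Writing h = f - x, the hypothesis gives g h^(2n) = h^(2n) g - 2n N h^n h^(n-1),
   which vanishes on the kernel of h^n. *)
Lemma stablemx_geigenspace_commutator (F : fieldType) n (f g N : 'M[F]_n) x :
  f * g - g * f = N -> GRing.comm N f -> stablemx (geigenspace f x) g.
Proof.
case: n => [|n'] in f g N *; first by rewrite [_ *m g]thinmx0 sub0mx.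
move=> fg Nf; set h := f - x%:M.
have Nh : GRing.comm N h.
  by rewrite /GRing.comm /h mulrBr mulrBl Nf -!mulmxE scalar_mxC.
have gh : g * h = h * g - N.
  rewrite /h -fg mulrBr mulrBl -!mulmxE scalar_mxC !mulmxE.
  by rewrite opprB addrA addrAC [f * g - _]addrC addrK addrC.
rewrite geigenspaceE -/h; apply: submx_trans (kermx_exprn h (n'.+1 + n'.+1)).
apply/sub_kermxP; rewrite -mulmxA mulmxE addnS (commutator_exprS gh Nh) -addnS.
rewrite !exprD mulrA (commrX _ Nh) -mulrA mulrBr -mulrnAr !mulrA.
by rewrite -!mulmxE mulmx_ker !mul0mx subrr.
Qed.

Lemma eigenvalue_commutator (F : numFieldType) n k m (a b c : 'M[F]_n) x :
  (0 < m)%N -> comm_mx a c -> comm_mx b c -> a *m b - b *m a = c ^+ k *+ m ->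
  eigenvalue c x -> x ^+ k = 0.
Proof.
move=> m_gt0 ac bc abc eig_x; set W := row_base (eigenspace c x).
have freeW : row_free W := row_base_free _.
have Wa : stablemx W a.
  by rewrite stablemx_row_base comm_mx_stable_eigenspace // comm_mx_sym.
have Wb : stablemx W b.
  by rewrite stablemx_row_base comm_mx_stable_eigenspace // comm_mx_sym.
have Wc : W *m c = x *: W by apply/eigenspaceP; rewrite eq_row_base.
have Wck i : W *m c ^+ i = x ^+ i *: W.
  elim: i => [|i IHi]; first by rewrite expr0 scale1r mulmx1.
  by rewrite exprSr -mulmxE mulmxA IHi -scalemxAl Wc scalerA -exprSr.
have : \tr (conjmx W a *m conjmx W b - conjmx W b *m conjmx W a) = 0.
  by rewrite raddfB /= mxtrace_mulC subrr.
rewrite -!conjmxM ?inE // /conjmx -mulmxBl -mulmxBr abc -scaler_nat.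
rewrite -scalemxAr Wck scalerA -scalemxAl mulmxVp // mxtraceZ mxtrace1.
move/eqP; rewrite mulr_natl mulr_natr -mulrnA mulrn_eq0 muln_eq0.
by rewrite eqn0Ngt m_gt0 mxrank_eq0 (negPf eig_x) => /eqP.
Qed.

Section Spectrum.
Variable F : closedFieldType.
Implicit Type x : F.

Definition char_roots n (g : 'M[F]_n) : seq F :=
  sval (closed_field_poly_normal (char_poly g)).

Lemma char_poly_roots n (g : 'M[F]_n) :
  char_poly g = \prod_(z <- char_roots g) ('X - z%:P).
Proof.
rewrite /char_roots; case: closed_field_poly_normal => r /= ->.
by rewrite (monicP (char_poly_monic g)) scale1r.
Qed.

Definition spectrum n (g : 'M[F]_n) : seq F := undup (char_roots g).

Lemma spectrum_eigenvalue n (g : 'M[F]_n) x : x \in spectrum g -> eigenvalue g x.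
Proof.
by rewrite mem_undup eigenvalue_root_char char_poly_roots root_prod_XsubC.
Qed.

Lemma char_poly_dvd_prod_spectrum n (g : 'M[F]_n) :
  char_poly g %| \prod_(x <- spectrum g) ('X - x%:P) ^+ n.
Proof.
have size_roots : size (char_roots g) = n.
  by have := size_char_poly g; rewrite char_poly_roots size_prod_XsubC => -[].
rewrite char_poly_roots -big_undup_iterop_count.
apply: (big_ind2 (fun p q : {poly F} => p %| q)) => // [p1 p2 q1 q2|x _].
  exact: dvdp_mul.
rewrite Monoid.iteropE iter_mulr_1 dvdp_exp2l //.
by rewrite -[X in (_ <= X)%N]size_roots count_size.
Qed.

Lemma kermxpoly_prod_spectrum n (g : 'M[F]_n) :
  (1%:M <= kermxpoly g (\prod_(x <- spectrum g) ('X - x%:P) ^+ n))%MS.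
Proof.
case: n g => [|n'] g; first by rewrite thinmx0 sub0mx.
rewrite kermxpoly_min //.
exact: dvdp_trans (mxminpoly_dvd_char g) (char_poly_dvd_prod_spectrum g).
Qed.

Lemma sum_geigenspace_spectrum n (g : 'M[F]_n) :
  (1%:M <= \sum_(x <- spectrum g) geigenspace g x)%MS.
Proof.
by rewrite -(kermxpoly_prod_XsubC_expr g n (undup_uniq _)) kermxpoly_prod_spectrum.
Qed.

Lemma geigenspace_notin_spectrum n (g : 'M[F]_n) x :
  x \notin spectrum g -> geigenspace g x = 0.
Proof.
move=> xNg; apply/eqP; rewrite -submx0.
rewrite -(mxdirect_kermxpoly g (coprimep_XsubC_expr_prod n xNg)) sub_capmx submx_refl.
exact: submx_trans (submx1 _) (kermxpoly_prod_spectrum g).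
Qed.

(* Restrict g to V and decompose the restriction with the factors of the
   characteristic polynomial of g, which it also annihilates. *)
Lemma stablemx_sub_sum_geigenspace n (g V : 'M[F]_n) : stablemx V g ->
  (V <= \sum_(x <- spectrum g) (V :&: geigenspace g x))%MS.
Proof.
move=> Vg; set W := row_base V.
have freeW : row_free W := row_base_free V.
have Wg : stablemx W g by rewrite stablemx_row_base.
have : (1%:M <= kermxpoly (conjmx W g) (\prod_(x <- spectrum g) ('X - x%:P) ^+ n))%MS.
  rewrite sub_kermxpoly_conjmx // mul1mx.
  exact: submx_trans (submx1 W) (kermxpoly_prod_spectrum g).
rewrite kermxpoly_prod_XsubC_expr ?undup_uniq // => /(submxMr W).
rewrite mul1mx => sW; have sVW : (V <= W)%MS by rewrite eq_row_base.
apply: submx_trans sVW (submx_trans sW (submx_trans (sumsmx_seqMr _ _ _) _)).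
apply: sumsmx_seqS => x _.
rewrite genmxE sub_capmx /geigenspace -sub_kermxpoly_conjmx // submx_refl andbT.
by apply: submx_trans (submxMl _ W) _; rewrite eq_row_base.
Qed.

End Spectrum.

Section JointGeneralizedEigenspaces.
Variables (F : closedFieldType) (n : nat) (a b : 'M[F]_n).

Definition joint_geigenspace (s : F * F) : 'M[F]_n :=
  (geigenspace a s.1 :&: geigenspace b s.2)%MS.

Definition joint_spectrum : seq (F * F) :=
  [seq s <- [seq (x, y) | x <- spectrum a, y <- spectrum b] | joint_geigenspace s != 0].

Lemma uniq_joint_spectrum : uniq joint_spectrum.
Proof.
apply/filter_uniq/allpairs_uniq; rewrite ?undup_uniq //.
by move=> [? ?] [? ?] _ _ [-> ->].
Qed.

Lemma mem_joint_spectrum s : (s \in joint_spectrum) = (joint_geigenspace s != 0).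
Proof.
rewrite mem_filter andb_idr // => /negP nzJ; case: s nzJ => x y nzJ.
apply: allpairs_f; apply/negPn/negP => notin_spec; apply: nzJ.
  by rewrite /joint_geigenspace (geigenspace_notin_spectrum notin_spec) cap0mx.
by rewrite /joint_geigenspace (geigenspace_notin_spectrum notin_spec) capmx0.
Qed.

Lemma stablemx_joint_geigenspace f s :
  (forall x, stablemx (geigenspace a x) f) ->
  (forall y, stablemx (geigenspace b y) f) ->
  stablemx (joint_geigenspace s) f.
Proof.
move=> fa fb; rewrite sub_capmx.
rewrite (submx_trans (submxMr f (capmxSl _ _))) //.
by rewrite (submx_trans (submxMr f (capmxSr _ _))).
Qed.

Lemma joint_geigenspace_sub_sum s :
  (joint_geigenspace s <= \sum_(t <- joint_spectrum) joint_geigenspace t)%MS.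
Proof.
have [->|nzJ] := eqVneq (joint_geigenspace s) 0; first exact: sub0mx.
by apply: sumsmx_seq_sup; rewrite mem_joint_spectrum.
Qed.

Lemma mxdirect_sum_joint_geigenspace :
  mxdirect (\sum_(s <- joint_spectrum) joint_geigenspace s).
Proof.
rewrite mxdirectEgeq /= big_filter big_mkcond /=.
apply: leq_trans (_ : \sum_(s <- [seq (x, y) | x <- spectrum a, y <- spectrum b])
  \rank (joint_geigenspace s) <= _)%N.
  by apply: leq_sum => s _; case: ifP.
rewrite big_allpairs.
have dir_b x : mxdirect (\sum_(y <- spectrum b) joint_geigenspace (x, y)).
  by apply: mxdirect_sum_sub_geigenspace (undup_uniq _) _ => y _; apply: capmxSr.
under eq_bigr => x _ do rewrite -(mxdirectP (dir_b x)) /=.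
rewrite -(mxdirectP _) /=; last first.
  apply: mxdirect_sum_sub_geigenspace (undup_uniq _) _ => x _.
  by apply: sumsmx_seq_sub => y _; apply: capmxSl.
apply/mxrankS/sumsmx_seq_sub => x _; apply: sumsmx_seq_sub => y _.
exact: joint_geigenspace_sub_sum.
Qed.

Hypothesis stable_geigenspace : forall x, stablemx (geigenspace a x) b.

Lemma sum_joint_geigenspace :
  (\sum_(s <- joint_spectrum) joint_geigenspace s == 1%:M)%MS.
Proof.
rewrite submx1 /=; apply: submx_trans (sum_geigenspace_spectrum a) _.
apply: sumsmx_seq_sub => x _.
apply: submx_trans (stablemx_sub_sum_geigenspace (stable_geigenspace x)) _.
by apply: sumsmx_seq_sub => y _; apply: (joint_geigenspace_sub_sum (x, y)).
Qed.

End JointGeneralizedEigenspaces.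

Section JacobiRepresentation.
Variables (F : numClosedFieldType) (n d : nat) (a b c : 'M[F]_n).
Hypotheses (d_gt1 : (1 < d)%N) (ac : comm_mx a c) (bc : comm_mx b c).
Hypothesis ab : a *m b - b *m a = c ^+ d.-1 *+ d.

Lemma comm_jacobi_commutator f : comm_mx f c -> GRing.comm f (c ^+ d.-1 *+ d).
Proof. by move=> fc; apply/commrMn/commrX; rewrite /GRing.comm -!mulmxE fc. Qed.

Lemma stablemx_geigenspace_ab x : stablemx (geigenspace a x) b.
Proof.
apply: stablemx_geigenspace_commutator (commr_sym (comm_jacobi_commutator ac)).
by rewrite -!mulmxE.
Qed.

Lemma stablemx_geigenspace_ba x : stablemx (geigenspace b x) a.
Proof.
apply: (stablemx_geigenspace_commutator (N := - (c ^+ d.-1 *+ d))).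
  by rewrite -!mulmxE -ab opprB.
exact/commr_sym/commrN/comm_jacobi_commutator.
Qed.

Lemma eigenvalue_jacobi_c x : eigenvalue c x -> x = 0.
Proof.
move/(eigenvalue_commutator (ltnW d_gt1) ac bc ab)/eqP.
by rewrite expf_eq0 -subn1 subn_gt0 d_gt1 => /eqP.
Qed.

Lemma geigenspace_jacobi_c0 : (1%:M <= geigenspace c 0)%MS.
Proof.
apply: submx_trans (sum_geigenspace_spectrum c) _; apply: sumsmx_seq_sub => x.
by move/spectrum_eigenvalue/eigenvalue_jacobi_c->.
Qed.

Lemma nilpotent_jacobi_c : c ^+ n = 0.
Proof. exact/geigenspace0_full_nilpotent/geigenspace_jacobi_c0. Qed.

Lemma geigenspace_jacobi_c x : x != 0 -> geigenspace c x = 0.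
Proof.
move=> x_neq0; apply/eqP; rewrite -submx0 -(capmx_geigenspace c x_neq0) sub_capmx.
by rewrite submx_refl (submx_trans (submx1 _) geigenspace_jacobi_c0).
Qed.

End JacobiRepresentation.

Lemma trmxX (R : comPzRingType) n (M : 'M[R]_n) k : (M ^+ k)^T = M^T ^+ k.
Proof.
elim: k => [|k IHk]; first by rewrite !expr0 tr_scalar_mx.
by rewrite exprSr -mulmxE trmx_mul IHk mulmxE -exprS.
Qed.

Lemma geneigE n (M : 'M[algC]_n) l : geneig M l = geigenspace M^T l.
Proof.
case: n M => [|n'] M; first by rewrite !thinmx0.
by rewrite /geneig geigenspaceE trmxX linearB /= tr_scalar_mx.
Qed.

Lemma jacobi_rep_trmx d n (A B C : 'M[algC]_n) : jacobi_rep d A B C ->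
  [/\ comm_mx A^T C^T, comm_mx B^T C^T & A^T *m B^T - B^T *m A^T = C^T ^+ d.-1 *+ d].
Proof.
case=> /subr0_eq BC /subr0_eq CA /eqP; rewrite addr_eq0 => /eqP AB.
rewrite /comm_mx -!trmx_mul BC CA; split=> //.
by rewrite -linearB /= -opprB AB opprK raddfMn /= trmxX.
Qed.
Theorem mainTheorem8 (d n : nat) (A B C : 'M[algC]_n) :
  (2 <= d)%N -> jacobi_rep d A B C ->
  [/\ (* each operator preserves the generalized eigenspaces of the others *)
      (preserves_geneigs A B /\ preserves_geneigs A C),
      (preserves_geneigs B A /\ preserves_geneigs B C),
      (preserves_geneigs C A /\ preserves_geneigs C B),
      (* rho(c) is nilpotent *)
      (exists k : nat, C ^+ k = 0) &
      (* canonical decomposition into nonzero submodules rho_s, s in Sigma *)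
      exists Sigma : seq (algC * algC),
        [/\ uniq Sigma,
            (forall s, (s \in Sigma) <-> (joint_geneig A B s != 0)),
            (\sum_(s <- Sigma) joint_geneig A B s == 1%:M)%MS,
            mxdirect (\sum_(s <- Sigma) joint_geneig A B s) &
            forall s, s \in Sigma ->
              [/\ op_stable (joint_geneig A B s) A,
                  op_stable (joint_geneig A B s) B,
                  op_stable (joint_geneig A B s) C &
                  [/\ forall l, (joint_geneig A B s :&: geneig A l != 0)%MS -> l = s.1,
                      forall l, (joint_geneig A B s :&: geneig B l != 0)%MS -> l = s.2 &
                      forall l, (joint_geneig A B s :&: geneig C l != 0)%MS -> l = 0]]]].
Proof.
move=> d_gt1 /jacobi_rep_trmx[ac bc ab].
have jointE s : joint_geneig A B s = joint_geigenspace A^T B^T s.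
  by rewrite /joint_geneig !geneigE.
have stab_ab := stablemx_geigenspace_ab ac ab.
have stab_ba := stablemx_geigenspace_ba bc ab.
rewrite /preserves_geneigs /op_stable; split.
- by split=> l; rewrite geneigE;
    [apply: stab_ba | apply/comm_mx_stable_geigenspace/comm_mx_sym].
- by split=> l; rewrite geneigE;
    [apply: stab_ab | apply/comm_mx_stable_geigenspace/comm_mx_sym].
- by split=> l; rewrite geneigE; apply: comm_mx_stable_geigenspace.
- exists n; rewrite -[C]trmxK -trmxX.
  by rewrite (nilpotent_jacobi_c d_gt1 ac bc ab) trmx0.
exists (joint_spectrum A^T B^T); split.
- exact: uniq_joint_spectrum.
- by move=> s; rewrite jointE mem_joint_spectrum.
- rewrite (eq_bigr _ (fun s _ => jointE s)); exact: sum_joint_geigenspace.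
- rewrite mxdirectE /= (eq_bigr _ (fun s _ => jointE s)).
  rewrite [X in _ == X](eq_bigr _ (fun s _ => congr1 (fun M => \rank M) (jointE s))).
  by have := mxdirect_sum_joint_geigenspace A^T B^T; rewrite mxdirectE.
move=> s _; rewrite !jointE; split.
- by apply: stablemx_joint_geigenspace => l;
    [apply: comm_mx_stable_geigenspace | apply: stab_ba].
- by apply: stablemx_joint_geigenspace => l;
    [apply: stab_ab | apply: comm_mx_stable_geigenspace].
- by apply: stablemx_joint_geigenspace => l; apply: comm_mx_stable_geigenspace.
split=> l; rewrite geneigE.
- exact/geigenspace_cap_neq0/capmxSl.
- exact/geigenspace_cap_neq0/capmxSr.
- apply: contraTeq => l_neq0.
  by rewrite (geigenspace_jacobi_c d_gt1 ac bc ab l_neq0) capmx0 eqxx.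
Qed.
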